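(* Let $V$ be a two-sided vector space of rank $n$ with simultaneous basis $y_1,\dots,y_n$, and let $A=(a_{ij})$ and $B=(b_{ij})$ be the $n\times n$ matrices of additive functions $K\to K$ defined by $y_i\alpha=\sum_j a_{ij}(\alpha)y_j$ and $\delta y_i=\sum_j y_jb_{ji}(\delta)$ for all $\alpha,\delta\in K$. Then $A^TB=BA^T=I_n$ in $M_n(F)$.
   Context: Let $k\subset K$ be fields. A two-sided vector space is a $K\otimes_kK$-module; left (resp. right) multiplication by $K$ is the action of $K\otimes1$ (resp. $1\otimes K$). Rank $n$ means dimension $n$ both as left and right $K$-vector space; a simultaneous basis is a basis for both actions. $F$ is the ring of additive functions $K\to K$ with pointwise addition and multiplication given by composition, so that in $M_n(F)$ the $(k,i)$ entry of $A^TB$ is the function $\delta\mapsto\sum_j a_{jk}(b_{ji}(\delta))$; $I_n$ is the identity matrix whose diagonal entries are the identity function. *)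

From HB Require Import structures.
From mathcomp Require Import all_boot all_order all_algebra.
Set Implicit Arguments. Unset Strict Implicit. Unset Printing Implicit Defensive.
Import GRing.Theory.
Local Open Scope ring_scope.

(* A two-sided vector space over k ⊂ K, i.e. a (K ⊗_k K)-module.
   The subfield k is given as a field kF with a (necessarily injective) ring
   morphism iota : kF -> K.  The left action of K (action of K ⊗ 1) is the
   lmodType structure of V (written a *: v); the right action (action of
   1 ⊗ K) is the function ract (v α is written ract v α).  The two actions
   commute and agree on k, which is exactly a K ⊗_k K-module structure. *)
Definition two_sided (kF K : fieldType) (iota : {rmorphism kF -> K})
  (V : lmodType K) (ract : V -> K -> V) : Prop :=
  (forall v w a, ract (v + w) a = ract v a + ract w a) /\
  (forall v a b, ract v (a + b) = ract v a + ract v b) /\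
  (forall v, ract v 1 = v) /\
  (forall v a b, ract (ract v a) b = ract v (a * b)) /\
  (forall a v b, ract (a *: v) b = a *: ract v b) /\
  (forall v c, ract v (iota c) = iota c *: v).

Definition left_basis (K : fieldType) (V : lmodType K) (n : nat)
  (y : 'I_n -> V) : Prop :=
  (forall c : 'I_n -> K, \sum_i c i *: y i = 0 -> forall i, c i = 0) /\
  (forall v : V, exists c : 'I_n -> K, v = \sum_i c i *: y i).

Definition right_basis (K : fieldType) (V : lmodType K) (ract : V -> K -> V)
  (n : nat) (y : 'I_n -> V) : Prop :=
  (forall c : 'I_n -> K, \sum_i ract (y i) (c i) = 0 -> forall i, c i = 0) /\
  (forall v : V, exists c : 'I_n -> K, v = \sum_i ract (y i) (c i)).

Definition simultaneous_basis (K : fieldType) (V : lmodType K)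
  (ract : V -> K -> V) (n : nat) (y : 'I_n -> V) : Prop :=
  left_basis y /\ right_basis ract y.

From HB Require Import structures.
From mathcomp Require Import all_boot all_order all_algebra.
Set Implicit Arguments. Unset Strict Implicit. Unset Printing Implicit Defensive.
Import GRing.Theory.
Local Open Scope ring_scope.

(* Expanding [delta y_i] first through [b] and then through [a] gives its left
   coordinates as [sum_j a_jk (b_ji delta)], which must be those of
   [delta y_i] itself by left freeness; symmetrically, expanding [y_i alpha]
   through [a] and then [b] and using right freeness gives the other identity. *)

Lemma sum_scale_delta (K : fieldType) (V : lmodType K) n (y : 'I_n -> V)
    (i : 'I_n) (d : K) :
  \sum_k (if k == i then d else 0) *: y k = d *: y i.
Proof.
by rewrite (bigD1 i) //= eqxx big1 ?addr0 // => k /negbTE ->; rewrite scale0r.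
Qed.

Lemma left_basis_coord_eq (K : fieldType) (V : lmodType K) n (y : 'I_n -> V)
    (c d : 'I_n -> K) :
  left_basis y -> \sum_i c i *: y i = \sum_i d i *: y i -> forall i, c i = d i.
Proof.
move=> [free _] eq_cd i; apply/eqP; rewrite -subr_eq0; apply/eqP.
apply: (free (fun i => c i - d i)).
by under eq_bigr do rewrite scalerBl; rewrite sumrB eq_cd subrr.
Qed.

Section RightAction.

Variables (K : fieldType) (V : lmodType K) (ract : V -> K -> V).
Hypothesis ractD : forall v a b, ract v (a + b) = ract v a + ract v b.

Lemma ract0 v : ract v 0 = 0.
Proof. by apply: (@addrI _ (ract v 0)); rewrite -ractD !addr0. Qed.

Lemma ractB v a b : ract v (a - b) = ract v a - ract v b.
Proof. by apply/eqP; rewrite eq_sym subr_eq -ractD subrK. Qed.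

Lemma ract_sum v n (F : 'I_n -> K) : ract v (\sum_i F i) = \sum_i ract v (F i).
Proof. by elim/big_ind2: _ => [|x1 x2 y1 y2 <- <-|]; rewrite ?ract0 ?ractD. Qed.

Lemma sum_ract_delta n (y : 'I_n -> V) (i : 'I_n) (d : K) :
  \sum_k ract (y k) (if k == i then d else 0) = ract (y i) d.
Proof.
by rewrite (bigD1 i) //= eqxx big1 ?addr0 // => k /negbTE ->; rewrite ract0.
Qed.

Lemma right_basis_coord_eq n (y : 'I_n -> V) (c d : 'I_n -> K) :
  right_basis ract y ->
  \sum_i ract (y i) (c i) = \sum_i ract (y i) (d i) -> forall i, c i = d i.
Proof.
move=> [free _] eq_cd i; apply/eqP; rewrite -subr_eq0; apply/eqP.
apply: (free (fun i => c i - d i)).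
by under eq_bigr do rewrite ractB; rewrite sumrB eq_cd subrr.
Qed.

Variables (n : nat) (y : 'I_n -> V) (a b : 'I_n -> 'I_n -> K -> K).
Hypothesis ract_y : forall i alpha, ract (y i) alpha = \sum_j a i j alpha *: y j.
Hypothesis scale_y : forall i delta, delta *: y i = \sum_j ract (y j) (b j i delta).

Lemma trmx_mul_eq1 : left_basis y ->
  forall k i delta, \sum_j a j k (b j i delta) = if k == i then delta else 0.
Proof.
move=> basis_y k i delta.
apply: (left_basis_coord_eq (c := fun k => \sum_j a j k (b j i delta))
  (d := fun k => if k == i then delta else 0) basis_y).
rewrite sum_scale_delta scale_y; under [RHS]eq_bigr do rewrite ract_y.
by rewrite exchange_big /=; under eq_bigr do rewrite scaler_suml.
Qed.

Lemma mul_trmx_eq1 : right_basis ract y ->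
  forall k i delta, \sum_j b k j (a i j delta) = if k == i then delta else 0.
Proof.
move=> basis_y k i delta.
apply: (right_basis_coord_eq (c := fun k => \sum_j b k j (a i j delta))
  (d := fun k => if k == i then delta else 0) basis_y).
rewrite sum_ract_delta ract_y; under eq_bigr do rewrite ract_sum.
by rewrite exchange_big /=; under [RHS]eq_bigr do rewrite scale_y.
Qed.

End RightAction.

Theorem proposition3p6 (kF K : fieldType) (iota : {rmorphism kF -> K})
  (V : lmodType K) (ract : V -> K -> V) (n : nat) (y : 'I_n -> V)
  (a b : 'I_n -> 'I_n -> K -> K) :
  two_sided iota ract ->
  simultaneous_basis ract y ->
  (forall (i : 'I_n) (alpha : K), ract (y i) alpha = \sum_j a i j alpha *: y j) ->
  (forall (i : 'I_n) (delta : K), delta *: y i = \sum_j ract (y j) (b j i delta)) ->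
  (forall (k i : 'I_n) (delta : K),
      \sum_j a j k (b j i delta) = if k == i then delta else 0) /\
  (forall (k i : 'I_n) (delta : K),
      \sum_j b k j (a i j delta) = if k == i then delta else 0).
Proof.
move=> [_ [ractD _]] [left_y right_y] ract_y scale_y.
split; first exact: trmx_mul_eq1 ract_y scale_y left_y.
by move=> k i delta; apply: (mul_trmx_eq1 ractD ract_y scale_y right_y).
Qed.
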